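(* Let $0<t_0\le1/2$, $t\in[t_0,1]$. There exist nonnegative integers $c^{k,j}_{\ell,p,q}$ ($k,j,\ell,p,q\in\mathbb Z_+$), with $c^{0,0}_{0,0,0}=1$, determined by the recursion $$c^{k+1,j}_{\ell,p,q}=c^{k,j-2}_{\ell,p-1,q}+c^{k,j}_{\ell,p,q-1}+2c^{k,j-1}_{\ell-1,p,q}$$ under the convention that $c^{k,j}_{\ell,p,q}=0$ if $j>2k$ or any entry of $(j,\ell,p,q)$ is negative, such that for every $k\in\mathbb Z_+$ and all sufficiently smooth functions $g,h$ on $\mathbb T^3\times\mathbb R^3$, $$M^k(gh)=\sum_{j=0}^{2k}A_{j,2k-j}(g,h),\qquad A_{j,2k-j}(g,h)=\sum_{\ell+2p=j,\ \ell+2q=2k-j}c^{k,j}_{\ell,p,q}\,(\Lambda^\ell M^pg)\cdot(\Lambda^\ell M^qh),$$ the inner sum being over all nonnegative integers $\ell,p,q$ with $\ell+2p=j$ and $\ell+2q=2k-j$. Moreover $$\sum_{\ell+2p=j,\ \ell+2q=2k-j}c^{k,j}_{\ell,p,q}=\binom{2k}{j}.$$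
   Context: $M=-(t-t_0)\partial_{v_1}^2-(t-t_0)^2\partial_{x_1}\partial_{v_1}-\frac{(t-t_0)^3}{3}\partial_{x_1}^2$ acting on functions of $(x,v)\in\mathbb T^3\times\mathbb R^3$. With $\sqrt{-1}$ the imaginary unit, $\Lambda_1=\frac{1}{2\sqrt{-1}}\big((t-t_0)^{1/2}\partial_{v_1}+(t-t_0)^{3/2}\partial_{x_1}\big)$ and $\Lambda_2=\frac{\sqrt3}{6\sqrt{-1}}\big(3(t-t_0)^{1/2}\partial_{v_1}+(t-t_0)^{3/2}\partial_{x_1}\big)$, so that $M=\Lambda_1^2+\Lambda_2^2$. For $\ell\in\mathbb Z_+$, $\Lambda^\ell g\cdot\Lambda^\ell h:=\sum_{j_1=1}^2\cdots\sum_{j_\ell=1}^2(\Lambda_{j_1}\cdots\Lambda_{j_\ell}g)(\Lambda_{j_1}\cdots\Lambda_{j_\ell}h)$ (equal to $gh$ when $\ell=0$). *)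

From Stdlib Require Import Reals List.
From Coquelicot Require Import Coquelicot.
Open Scope R_scope.

(** Points (x,v) with x = (x1,x2,x3), v = (v1,v2,v3).  Functions on
    T^3 x R^3 are represented as functions on R^3 x R^3 that are
    1-periodic in each x_i (see [periodic_x]). *)
Definition state : Type := ((R * R * R) * (R * R * R))%type.

Definition x1_of (z : state) : R := let '((a, _, _), _) := z in a.
Definition v1_of (z : state) : R := let '(_, (b, _, _)) := z in b.
Definition set_x1 (z : state) (s : R) : state :=
  let '((_, a2, a3), v) := z in ((s, a2, a3), v).
Definition set_v1 (z : state) (s : R) : state :=
  let '(x, (_, b2, b3)) := z in (x, (s, b2, b3)).

Definition periodic_x {T : Type} (f : state -> T) : Prop :=
  forall a1 a2 a3 b1 b2 b3 : R,
    f ((a1 + 1, a2, a3), (b1, b2, b3)) = f ((a1, a2, a3), (b1, b2, b3)) /\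
    f ((a1, a2 + 1, a3), (b1, b2, b3)) = f ((a1, a2, a3), (b1, b2, b3)) /\
    f ((a1, a2, a3 + 1), (b1, b2, b3)) = f ((a1, a2, a3), (b1, b2, b3)).

Definition pdx1R (u : state -> R) : state -> R :=
  fun z => Derive (fun s => u (set_x1 z s)) (x1_of z).
Definition pdv1R (u : state -> R) : state -> R :=
  fun z => Derive (fun s => u (set_v1 z s)) (v1_of z).

Fixpoint iterDR (w : list bool) (u : state -> R) : state -> R :=
  match w with
  | nil => u
  | b :: w' => (if b then pdx1R else pdv1R) (iterDR w' u)
  end.

(** "Sufficiently smooth" in the variables (x1,v1) on which all operators act:
    every iterated partial derivative in x1, v1 is differentiable in x1 and in v1
    and jointly continuous in (x1,v1). *)
Definition smoothR (u : state -> R) : Prop :=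
  forall (w : list bool) (z : state),
    ex_derive (fun s => iterDR w u (set_x1 z s)) (x1_of z) /\
    ex_derive (fun s => iterDR w u (set_v1 z s)) (v1_of z) /\
    continuous (fun ab : R * R => iterDR w u (set_x1 (set_v1 z (snd ab)) (fst ab)))
               (x1_of z, v1_of z).

Definition smoothC (f : state -> C) : Prop :=
  smoothR (fun z => Re (f z)) /\ smoothR (fun z => Im (f z)).

Definition pdx1 (f : state -> C) : state -> C :=
  fun z => (pdx1R (fun y => Re (f y)) z, pdx1R (fun y => Im (f y)) z).
Definition pdv1 (f : state -> C) : state -> C :=
  fun z => (pdv1R (fun y => Re (f y)) z, pdv1R (fun y => Im (f y)) z).

Definition cscale (a : C) (f : state -> C) : state -> C := fun z => Cmult a (f z).
Definition fadd (f g : state -> C) : state -> C := fun z => Cplus (f z) (g z).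
Definition fmul (f g : state -> C) : state -> C := fun z => Cmult (f z) (g z).

Definition Mop (t0 t : R) (f : state -> C) : state -> C :=
  fadd (cscale (RtoC (- (t - t0))) (pdv1 (pdv1 f)))
   (fadd (cscale (RtoC (- (t - t0) ^ 2)) (pdx1 (pdv1 f)))
         (cscale (RtoC (- ((t - t0) ^ 3 / 3))) (pdx1 (pdx1 f)))).

Definition Lam1 (t0 t : R) (f : state -> C) : state -> C :=
  cscale (Cinv (Cmult (RtoC 2) Ci))
    (fadd (cscale (RtoC (sqrt (t - t0))) (pdv1 f))
          (cscale (RtoC ((t - t0) * sqrt (t - t0))) (pdx1 f))).

Definition Lam2 (t0 t : R) (f : state -> C) : state -> C :=
  cscale (Cdiv (RtoC (sqrt 3)) (Cmult (RtoC 6) Ci))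
    (fadd (cscale (RtoC (3 * sqrt (t - t0))) (pdv1 f))
          (cscale (RtoC ((t - t0) * sqrt (t - t0))) (pdx1 f))).

Definition LamJ (t0 t : R) (j : nat) : (state -> C) -> state -> C :=
  if Nat.eqb j 1 then Lam1 t0 t else Lam2 t0 t.

Fixpoint words (l : nat) : list (list nat) :=
  match l with
  | O => nil :: nil
  | S l' => flat_map (fun w => (1%nat :: w) :: (2%nat :: w) :: nil) (words l')
  end.

Definition applyLam (t0 t : R) (w : list nat) (f : state -> C) : state -> C :=
  fold_right (fun j acc => LamJ t0 t j acc) f w.

Definition Csum (l : list C) : C := fold_right Cplus (RtoC 0) l.

Definition LamDot (t0 t : R) (l : nat) (g h : state -> C) : state -> C :=
  fun z => Csum (map (fun w => Cmult (applyLam t0 t w g z) (applyLam t0 t w h z))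
                     (words l)).

Fixpoint coef (k j l p q : nat) : nat :=
  match k with
  | O => if (Nat.eqb j 0 && Nat.eqb l 0 && Nat.eqb p 0 && Nat.eqb q 0)%bool
         then 1%nat else 0%nat
  | S k' =>
      if Nat.ltb (2 * k) j then 0%nat else
      ((if (Nat.leb 2 j && Nat.leb 1 p)%bool then coef k' (j - 2) l (p - 1) q else 0)
     + (if Nat.leb 1 q then coef k' j l p (q - 1) else 0)
     + 2 * (if (Nat.leb 1 j && Nat.leb 1 l)%bool then coef k' (j - 1) (l - 1) p q else 0))%nat
  end.

(** Sum over all (l,p,q) in nat^3 with l + 2p = j and l + 2q = 2k - j
    (all such triples satisfy l <= 2k, p <= k, q <= k). *)
Definition sum_lpq {A : Type} (add : A -> A -> A) (zero : A)
  (k j : nat) (F : nat -> nat -> nat -> A) : A :=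
  fold_right add zero
    (flat_map (fun l => flat_map (fun p => flat_map (fun q =>
        if (Nat.eqb (l + 2 * p) j && Nat.eqb (l + 2 * q) (2 * k - j))%bool
        then F l p q :: nil else nil)
      (seq 0 (S k))) (seq 0 (S k))) (seq 0 (S (2 * k)))).

Definition Aterm (t0 t : R) (k j : nat) (g h : state -> C) : state -> C :=
  fun z => sum_lpq Cplus (RtoC 0) k j (fun l p q =>
     Cmult (RtoC (INR (coef k j l p q)))
           (LamDot t0 t l (Nat.iter p (Mop t0 t) g) (Nat.iter q (Mop t0 t) h) z)).

(** Both [M] and the [Λ_i] are constant-coefficient operators in (x1, v1), so they commute
    (Schwarz's theorem), and polarizing [M = Λ1^2 + Λ2^2] gives the Leibniz rule
    [M(FG) = (MF)G + F(MG) + 2 ΛF·ΛG].  Hence [X(l,p,q) := Λ^l M^p g · Λ^l M^q h] satisfies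
    [M X(l,p,q) = X(l,p+1,q) + X(l,p,q+1) + 2 X(l+1,p,q)], and iterating from [X(0,0,0) = gh]
    expands [M^k(gh)] over the triples with [l + p + q = k], with coefficients obeying the
    recursion of [c^{k,j}_{l,p,q}] for [j = l + 2p], the only [j] where it does not vanish.
    Feeding the indicator of [l + 2p = j] through the same recursion shows that the sums
    [B_k(j)] of the [c^{k,j}_{l,p,q}] satisfy [B_{k+1}(j) = B_k(j-2) + 2 B_k(j-1) + B_k(j)],
    the recursion of the coefficients of [(1 + x)^(2k)]. *)

From Stdlib Require Import Reals List Lia Lra FunctionalExtensionality.
From Coquelicot Require Import Coquelicot.
Open Scope R_scope.

(** * Finite sums *)

Lemma Csum_app (l1 l2 : list C) : Csum (l1 ++ l2) = (Csum l1 + Csum l2)%C.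
Proof. induction l1 as [|a l IH]; simpl; [ring | rewrite IH; ring]. Qed.

Lemma Csum_map_seq (f : nat -> C) n : Csum (map f (seq 0 (S n))) = sum_n f n.
Proof.
  induction n as [|n IH]; [rewrite sum_O; simpl; ring|].
  rewrite seq_S, map_app, Csum_app, IH, sum_Sn. unfold plus; simpl. ring.
Qed.

Lemma Csum_flat_map {A : Type} (g : A -> list C) (L : list A) :
  Csum (flat_map g L) = Csum (map (fun x => Csum (g x)) L).
Proof. induction L as [|a L IH]; simpl; [reflexivity | now rewrite Csum_app, IH]. Qed.

Lemma Csum_map_Cplus {A : Type} (f g : A -> C) (L : list A) :
  Csum (map (fun a => f a + g a)%C L) = (Csum (map f L) + Csum (map g L))%C.
Proof. induction L as [|a L IH]; simpl; [ring | rewrite IH; ring]. Qed.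

Lemma Csum_map_Cmult_l {A : Type} (c : C) (f : A -> C) (L : list A) :
  Csum (map (fun a => c * f a)%C L) = (c * Csum (map f L))%C.
Proof. induction L as [|a L IH]; simpl; [ring | rewrite IH; ring]. Qed.

(* Coquelicot's [sum_n_plus] and [sum_n_mult_l] on [C], restated with [Cplus] and [Cmult]
   so that they can be used for rewriting. *)
Lemma sum_n_Cplus (f g : nat -> C) n :
  sum_n (fun i => f i + g i)%C n = (sum_n f n + sum_n g n)%C.
Proof. exact (sum_n_plus f g n). Qed.

Lemma sum_n_Cmult_l (c : C) (f : nat -> C) n :
  sum_n (fun i => c * f i)%C n = (c * sum_n f n)%C.
Proof. exact (sum_n_mult_l c f n). Qed.

Lemma sum_n_shift {G : AbelianMonoid} (a b : nat -> G) n :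
  a 0%nat = zero -> b n = zero -> (forall i, a (S i) = b i) -> sum_n a n = sum_n b n.
Proof.
  intros Ha0 Hbn Hab. destruct n as [|n]; [now rewrite !sum_O, Ha0, Hbn|].
  unfold sum_n. rewrite sum_Sn_m, Ha0, plus_zero_l by lia.
  rewrite <- sum_n_m_S, sum_n_Sm, Hbn, plus_zero_r by lia.
  apply sum_n_m_ext, Hab.
Qed.

Lemma sum_n_zero {G : AbelianMonoid} (a : nat -> G) n :
  (forall i, (i <= n)%nat -> a i = zero) -> sum_n a n = zero.
Proof.
  intros Ha. rewrite (sum_n_ext_loc a (fun _ => zero)) by exact Ha.
  exact (sum_n_m_const_zero 0 n).
Qed.

Lemma sum_n_support {G : AbelianMonoid} (a : nat -> G) n m : (n <= m)%nat ->
  (forall i, (n < i <= m)%nat -> a i = zero) -> sum_n a m = sum_n a n.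
Proof.
  intros Hnm Ha. induction Hnm as [|m Hnm IH]; [reflexivity|].
  rewrite sum_Sn, Ha, plus_zero_r by lia. apply IH. intros i Hi. apply Ha. lia.
Qed.

Lemma sum_n_indicator (a : nat) (y : C) n :
  sum_n (fun j => if Nat.eqb a j then y else RtoC 0) n = if Nat.leb a n then y else RtoC 0.
Proof.
  induction n as [|n IH].
  - rewrite sum_O. destruct a; reflexivity.
  - rewrite sum_Sn, IH. unfold plus; simpl.
    destruct (Nat.leb_spec a n), (Nat.eqb_spec a (S n)), (Nat.leb_spec a (S n)); try lia; ring.
Qed.

(** * The coefficients and the expansion *)

Lemma coef_eq0 k : forall j l p q,
  ~ (l + 2 * p = j /\ l + 2 * q + j = 2 * k)%nat -> coef k j l p q = 0%nat.
Proof.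
  induction k as [|k IH]; intros j l p q Hjlpq; cbn [coef].
  - destruct j, l, p, q; cbn; lia.
  - destruct (Nat.ltb (2 * S k) j); [reflexivity|].
    destruct (Nat.leb_spec 2 j), (Nat.leb_spec 1 p), (Nat.leb_spec 1 q),
      (Nat.leb_spec 1 j), (Nat.leb_spec 1 l); cbn [andb]; rewrite ?IH by lia; lia.
Qed.

Definition coef_lpq (k l p q : nat) : nat := coef k (l + 2 * p) l p q.

Lemma coef_lpq_eq0 k l p q : (l + p + q <> k)%nat -> coef_lpq k l p q = 0%nat.
Proof. intros H. apply coef_eq0. lia. Qed.

Lemma coef_lpq_S k l p q :
  coef_lpq (S k) l p q =
  (match p with O => O | S p => coef_lpq k l p q end
   + match q with O => O | S q => coef_lpq k l p q end
   + 2 * match l with O => O | S l => coef_lpq k l p q end)%nat.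
Proof.
  unfold coef_lpq at 1; cbn [coef].
  destruct (Nat.ltb_spec (2 * S k) (l + 2 * p)).
  - destruct p, q, l; rewrite ?coef_lpq_eq0 by lia; lia.
  - destruct (Nat.leb_spec 2 (l + 2 * p)), (Nat.leb_spec 1 p), (Nat.leb_spec 1 q),
      (Nat.leb_spec 1 (l + 2 * p)), (Nat.leb_spec 1 l); cbn [andb];
      destruct p as [|p], q as [|q], l as [|l]; try lia;
      unfold coef_lpq;
      rewrite ?Nat.mul_succ_r, ?Nat.add_assoc, ?Nat.add_sub, ?Nat.add_succ_l,
        ?Nat.sub_succ, ?Nat.sub_0_r;
      lia.
Qed.

Definition sum3 (N : nat) (F : nat -> nat -> nat -> C) : C :=
  sum_n (fun l => sum_n (fun p => sum_n (fun q => F l p q) N) N) N.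

Lemma sum3_ext N F G :
  (forall l p q, (l <= N)%nat -> (p <= N)%nat -> (q <= N)%nat -> F l p q = G l p q) ->
  sum3 N F = sum3 N G.
Proof.
  intros H. apply sum_n_ext_loc; intros l Hl. apply sum_n_ext_loc; intros p Hp.
  apply sum_n_ext_loc; intros q Hq. auto.
Qed.

Lemma sum3_Cplus N F G :
  sum3 N (fun l p q => F l p q + G l p q)%C = (sum3 N F + sum3 N G)%C.
Proof.
  unfold sum3. rewrite <- sum_n_Cplus. apply sum_n_ext; intros l.
  rewrite <- sum_n_Cplus. apply sum_n_ext; intros p. apply sum_n_Cplus.
Qed.

Lemma sum3_Cmult_l N c F : sum3 N (fun l p q => c * F l p q)%C = (c * sum3 N F)%C.
Proof.
  unfold sum3. rewrite <- sum_n_Cmult_l. apply sum_n_ext; intros l.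
  rewrite <- sum_n_Cmult_l. apply sum_n_ext; intros p. apply sum_n_Cmult_l.
Qed.

Lemma sum3_sum_n_switch N M (F : nat -> nat -> nat -> nat -> C) :
  sum3 N (fun l p q => sum_n (fun j => F j l p q) M) = sum_n (fun j => sum3 N (F j)) M.
Proof.
  unfold sum3.
  etransitivity; [|apply sum_n_switch]. apply sum_n_ext; intros l.
  etransitivity; [|apply sum_n_switch]. apply sum_n_ext; intros p.
  apply sum_n_switch.
Qed.

Lemma sum3_support k Nl Np Nq F : (k <= Nl)%nat -> (k <= Np)%nat -> (k <= Nq)%nat ->
  (forall l p q, (k < l \/ k < p \/ k < q)%nat -> F l p q = RtoC 0) ->
  sum_n (fun l => sum_n (fun p => sum_n (fun q => F l p q) Nq) Np) Nl = sum3 k F.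
Proof.
  intros Hl Hp Hq HF. unfold sum3.
  rewrite (sum_n_support _ k Nl) by
    (trivial; intros l Hl'; apply sum_n_zero; intros p _; apply sum_n_zero; intros q _;
     apply HF; lia).
  apply sum_n_ext_loc; intros l Hl'.
  rewrite (sum_n_support _ k Np) by
    (trivial; intros p Hp'; apply sum_n_zero; intros q _; apply HF; lia).
  apply sum_n_ext_loc; intros p Hp'.
  apply sum_n_support; [trivial | intros q Hq'; apply HF; lia].
Qed.

Definition coef_lpqC (k l p q : nat) : C := RtoC (INR (coef_lpq k l p q)).

Lemma coef_lpqC_eq0 k l p q : (l + p + q <> k)%nat -> coef_lpqC k l p q = RtoC 0.
Proof. intros H. unfold coef_lpqC. now rewrite coef_lpq_eq0. Qed.

Lemma coef_lpqC_S k l p q :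
  coef_lpqC (S k) l p q =
  (match p with O => 0 | S p => coef_lpqC k l p q end
   + match q with O => 0 | S q => coef_lpqC k l p q end
   + 2 * match l with O => 0 | S l => coef_lpqC k l p q end)%C.
Proof.
  unfold coef_lpqC. rewrite coef_lpq_S, !plus_INR, mult_INR, !RtoC_plus, RtoC_mult.
  replace (INR 2) with 2 by (simpl; ring).
  destruct p, q, l; cbn [INR]; ring.
Qed.

Definition expansion (k : nat) (Y : nat -> nat -> nat -> C) : C :=
  sum3 k (fun l p q => coef_lpqC k l p q * Y l p q)%C.

Lemma expansion_O Y : expansion 0 Y = Y 0%nat 0%nat 0%nat.
Proof. unfold expansion, sum3. rewrite !sum_O. change (coef_lpqC 0 0 0 0) with (RtoC 1). ring. Qed.

Lemma sum3_expansion k N Y : (k <= N)%nat ->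
  sum3 N (fun l p q => coef_lpqC k l p q * Y l p q)%C = expansion k Y.
Proof.
  intros HkN. apply sum3_support; trivial.
  intros l p q Hlpq. rewrite coef_lpqC_eq0 by lia. ring.
Qed.

Lemma expansion_ext k Y Y' :
  (forall l p q, (l + p + q = k)%nat -> Y l p q = Y' l p q) -> expansion k Y = expansion k Y'.
Proof.
  intros HY. apply sum3_ext; intros l p q _ _ _.
  destruct (Nat.eq_dec (l + p + q) k) as [E|E].
  - now rewrite HY.
  - rewrite coef_lpqC_eq0 by exact E. ring.
Qed.

Lemma expansion_Cplus k Y Y' :
  expansion k (fun l p q => Y l p q + Y' l p q)%C = (expansion k Y + expansion k Y')%C.
Proof.
  unfold expansion. rewrite <- sum3_Cplus. apply sum3_ext; intros. ring.
Qed.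

Lemma expansion_Cmult_l k c Y :
  expansion k (fun l p q => c * Y l p q)%C = (c * expansion k Y)%C.
Proof.
  unfold expansion. rewrite <- sum3_Cmult_l. apply sum3_ext; intros. ring.
Qed.

Lemma expansion_sum_n k M (Y : nat -> nat -> nat -> nat -> C) :
  expansion k (fun l p q => sum_n (fun j => Y j l p q) M) = sum_n (fun j => expansion k (Y j)) M.
Proof.
  unfold expansion. rewrite <- sum3_sum_n_switch. apply sum3_ext; intros.
  symmetry. apply sum_n_Cmult_l.
Qed.

Lemma sum3_shift_l k Y :
  sum3 (S k) (fun l p q => match l with O => 0 | S l => coef_lpqC k l p q end * Y l p q)%C
  = expansion k (fun l p q => Y (S l) p q).
Proof.
  rewrite <- (sum3_expansion k (S k)) by lia. unfold sum3. apply sum_n_shift.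
  - apply sum_n_zero; intros p _. apply sum_n_zero; intros q _. apply Cmult_0_l.
  - apply sum_n_zero; intros p _. apply sum_n_zero; intros q _.
    rewrite coef_lpqC_eq0 by lia. apply Cmult_0_l.
  - reflexivity.
Qed.

Lemma sum3_shift_p k Y :
  sum3 (S k) (fun l p q => match p with O => 0 | S p => coef_lpqC k l p q end * Y l p q)%C
  = expansion k (fun l p q => Y l (S p) q).
Proof.
  rewrite <- (sum3_expansion k (S k)) by lia. unfold sum3.
  apply sum_n_ext; intros l. apply sum_n_shift.
  - apply sum_n_zero; intros q _. apply Cmult_0_l.
  - apply sum_n_zero; intros q _. rewrite coef_lpqC_eq0 by lia. apply Cmult_0_l.
  - reflexivity.
Qed.

Lemma sum3_shift_q k Y :
  sum3 (S k) (fun l p q => match q with O => 0 | S q => coef_lpqC k l p q end * Y l p q)%C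
  = expansion k (fun l p q => Y l p (S q)).
Proof.
  rewrite <- (sum3_expansion k (S k)) by lia. unfold sum3.
  apply sum_n_ext; intros l. apply sum_n_ext; intros p. apply sum_n_shift.
  - apply Cmult_0_l.
  - rewrite coef_lpqC_eq0 by lia. apply Cmult_0_l.
  - reflexivity.
Qed.

(* Summation by parts against the recursion [coef_lpqC_S]. *)
Lemma expansion_S k Y :
  expansion (S k) Y =
  expansion k (fun l p q => Y l (S p) q + Y l p (S q) + 2 * Y (S l) p q)%C.
Proof.
  rewrite !expansion_Cplus, expansion_Cmult_l,
    <- sum3_shift_p, <- sum3_shift_q, <- sum3_shift_l, <- sum3_Cmult_l, <- !sum3_Cplus.
  apply sum3_ext; intros l p q _ _ _. rewrite coef_lpqC_S. ring.
Qed.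

(** * Binomial sums *)

Fixpoint choose (n m : nat) : nat :=
  match n, m with
  | _, O => 1
  | O, S _ => 0
  | S n, S m => choose n m + choose n (S m)
  end.

Lemma choose_n_0 n : choose n 0 = 1%nat.
Proof. now destruct n. Qed.

Lemma choose_gt n m : (n < m)%nat -> choose n m = 0%nat.
Proof.
  revert m; induction n as [|n IH]; intros [|m] Hnm; cbn; try lia.
  rewrite !IH by lia. reflexivity.
Qed.

Lemma INR_choose n m : (m <= n)%nat -> INR (choose n m) = Binomial.C n m.
Proof.
  revert m; induction n as [|n IH]; intros [|m] Hmn.
  - now rewrite C_n_0.
  - lia.
  - now rewrite choose_n_0, C_n_0.
  - cbn [choose]. rewrite plus_INR.
    destruct (Nat.eq_dec m n) as [->|Hm].
    + rewrite (choose_gt n (S n)), IH, !C_n_n by lia. simpl. ring.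
    + rewrite !IH by lia. apply pascal. lia.
Qed.

(* Under [expansion_S] the indicator of [l + 2p = j] transforms like the coefficients of a
   power of [(1 + x)^2]. *)
Lemma expansion_binomial k j :
  expansion k (fun l p q => if Nat.eqb (l + 2 * p) j then 1 else 0)%C
  = RtoC (INR (choose (2 * k) j)).
Proof.
  revert j; induction k as [|k IH]; intros j.
  - rewrite expansion_O. destruct j; reflexivity.
  - pose proof (IH 0%nat) as IH0. rewrite choose_n_0 in IH0.
    rewrite expansion_S. replace (2 * S k)%nat with (S (S (2 * k))) by lia.
    destruct j as [|[|j]]; cbn [choose]; rewrite ?choose_n_0, ?plus_INR, ?RtoC_plus;
      rewrite <- ?IH0, <- ?IH, <- ?expansion_Cplus; apply expansion_ext; intros l p q _;
      repeat match goal with |- context [Nat.eqb ?a ?b] => destruct (Nat.eqb_spec a b) end;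
      try lia; ring.
Qed.

Lemma fold_right_morph {A B : Type} (f : A -> B) addA zA addB zB (L : list A) :
  f zA = zB -> (forall a b, f (addA a b) = addB (f a) (f b)) ->
  f (fold_right addA zA L) = fold_right addB zB (map f L).
Proof. intros Hz Hadd. induction L as [|a L IH]; cbn; congruence. Qed.

Lemma map_flat_map {A B D : Type} (f : B -> D) (g : A -> list B) (L : list A) :
  map f (flat_map g L) = flat_map (fun x => map f (g x)) L.
Proof. induction L as [|a L IH]; cbn; [reflexivity | now rewrite map_app, IH]. Qed.

Lemma sum_lpq_morph {A B : Type} (f : A -> B) addA zA addB zB k j F :
  f zA = zB -> (forall a b, f (addA a b) = addB (f a) (f b)) ->
  f (sum_lpq addA zA k j F) = sum_lpq addB zB k j (fun l p q => f (F l p q)).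
Proof.
  intros Hz Hadd. unfold sum_lpq. rewrite (fold_right_morph f addA zA addB zB) by assumption.
  f_equal. rewrite map_flat_map. apply flat_map_ext; intros l.
  rewrite map_flat_map. apply flat_map_ext; intros p.
  rewrite map_flat_map. apply flat_map_ext; intros q.
  now destruct (_ && _)%bool.
Qed.

Lemma sum_lpq_sum_n k j F :
  sum_lpq Cplus (RtoC 0) k j F =
  sum_n (fun l => sum_n (fun p => sum_n (fun q =>
    if (Nat.eqb (l + 2 * p) j && Nat.eqb (l + 2 * q) (2 * k - j))%bool
    then F l p q else RtoC 0) k) k) (2 * k).
Proof.
  unfold sum_lpq. etransitivity; [apply Csum_flat_map|].
  rewrite Csum_map_seq. apply sum_n_ext; intros l.
  rewrite Csum_flat_map, Csum_map_seq. apply sum_n_ext; intros p.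
  rewrite Csum_flat_map, Csum_map_seq. apply sum_n_ext; intros q.
  destruct (_ && _)%bool; simpl; ring.
Qed.

Lemma sum_lpq_coef k j Y :
  sum_lpq Cplus (RtoC 0) k j (fun l p q => RtoC (INR (coef k j l p q)) * Y l p q)%C
  = expansion k (fun l p q => if Nat.eqb (l + 2 * p) j then Y l p q else 0)%C.
Proof.
  rewrite sum_lpq_sum_n. unfold expansion.
  rewrite <- (sum3_support k (2 * k) k k) by
    (lia || (intros l p q Hlpq; rewrite coef_lpqC_eq0 by lia; apply Cmult_0_l)).
  apply sum_n_ext; intros l. apply sum_n_ext; intros p. apply sum_n_ext; intros q.
  unfold coef_lpqC, coef_lpq.
  destruct (Nat.eqb_spec (l + 2 * p) j) as [<-|Hj]; cbn [andb]; [|symmetry; apply Cmult_0_r].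
  (* On the support of [coef k j], the constraint [l + 2q = 2k - j] is automatic. *)
  destruct (Nat.eqb_spec (l + 2 * q) (2 * k - (l + 2 * p))); [reflexivity|].
  rewrite coef_eq0 by lia. symmetry. apply Cmult_0_l.
Qed.

Lemma sum_lpq_coef_binomial k j : (j <= 2 * k)%nat ->
  INR (sum_lpq Nat.add 0%nat k j (fun l p q => coef k j l p q)) = Binomial.C (2 * k) j.
Proof.
  intros Hj. rewrite <- INR_choose by exact Hj. apply RtoC_inj.
  rewrite (sum_lpq_morph (fun n => RtoC (INR n)) Nat.add 0%nat Cplus (RtoC 0))
    by (reflexivity || (intros; now rewrite plus_INR, RtoC_plus)).
  rewrite <- expansion_binomial, <- (sum_lpq_coef k j (fun _ _ _ => RtoC 1)).
  f_equal. do 3 (apply functional_extensionality; intros). ring.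
Qed.

Lemma sum_n_sum_lpq_coef k Y :
  sum_n (fun j => sum_lpq Cplus (RtoC 0) k j
           (fun l p q => RtoC (INR (coef k j l p q)) * Y l p q)%C) (2 * k)
  = expansion k Y.
Proof.
  rewrite (sum_n_ext _ _ _ (fun j => sum_lpq_coef k j Y)), <- expansion_sum_n.
  apply expansion_ext; intros l p q Hlpq. rewrite sum_n_indicator.
  now replace (Nat.leb (l + 2 * p) (2 * k)) with true by (symmetry; apply Nat.leb_le; lia).
Qed.

(** * Partial derivatives and smoothness *)

(* [pdx1] and [pdv1] are [pdC set_x1 x1_of] and [pdC set_v1 v1_of] up to conversion. *)
Section CoordinateDerivative.

Variables (set : state -> R -> state) (get : state -> R).

Definition pdC (f : state -> C) : state -> C :=
  fun z => (Derive (fun s => fst (f (set z s))) (get z),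
            Derive (fun s => snd (f (set z s))) (get z)).

Definition diffC (f : state -> C) : Prop :=
  forall z, ex_derive (fun s => fst (f (set z s))) (get z) /\
            ex_derive (fun s => snd (f (set z s))) (get z).

Lemma diffC_fadd f g : diffC f -> diffC g -> diffC (fadd f g).
Proof.
  intros Hf Hg z. destruct (Hf z), (Hg z). unfold fadd, Cplus; simpl.
  split; now apply (ex_derive_plus (V := R_NormedModule)).
Qed.

Lemma diffC_cscale c f : diffC f -> diffC (cscale c f).
Proof.
  intros Hf z. destruct (Hf z). unfold cscale, Cmult; simpl.
  split; [apply (ex_derive_minus (V := R_NormedModule))
         | apply (ex_derive_plus (V := R_NormedModule))];
    now apply ex_derive_scal.
Qed.

Lemma diffC_fmul f g : diffC f -> diffC g -> diffC (fmul f g).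
Proof.
  intros Hf Hg z. destruct (Hf z), (Hg z). unfold fmul, Cmult; simpl.
  split; [apply (ex_derive_minus (V := R_NormedModule))
         | apply (ex_derive_plus (V := R_NormedModule))];
    now apply ex_derive_mult.
Qed.

Lemma diffC_const c : diffC (fun _ => c).
Proof. split; apply ex_derive_const. Qed.

Lemma pdC_fadd f g : diffC f -> diffC g -> pdC (fadd f g) = fadd (pdC f) (pdC g).
Proof.
  intros Hf Hg. apply functional_extensionality; intros z. destruct (Hf z), (Hg z).
  unfold pdC, fadd, Cplus; simpl. f_equal; now apply Derive_plus.
Qed.

Lemma pdC_cscale c f : diffC f -> pdC (cscale c f) = cscale c (pdC f).
Proof.
  intros Hf. apply functional_extensionality; intros z. destruct (Hf z).
  unfold pdC, cscale, Cmult; simpl.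
  rewrite Derive_minus, Derive_plus, !Derive_scal by now apply ex_derive_scal.
  f_equal; ring.
Qed.

Hypothesis set_get : forall z, set z (get z) = z.

Lemma pdC_fmul f g :
  diffC f -> diffC g -> pdC (fmul f g) = fadd (fmul (pdC f) g) (fmul f (pdC g)).
Proof.
  intros Hf Hg. apply functional_extensionality; intros z. destruct (Hf z), (Hg z).
  unfold pdC, fmul, fadd, Cmult, Cplus; simpl.
  rewrite Derive_minus, Derive_plus, !Derive_mult, !set_get
    by first [assumption | now apply ex_derive_mult].
  f_equal; ring.
Qed.

End CoordinateDerivative.

Lemma set_x1_x1_of z : set_x1 z (x1_of z) = z.
Proof. now destruct z as [[[a1 a2] a3] [[b1 b2] b3]]. Qed.

Lemma set_v1_v1_of z : set_v1 z (v1_of z) = z.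
Proof. now destruct z as [[[a1 a2] a3] [[b1 b2] b3]]. Qed.

Definition diff1 (f : state -> C) : Prop :=
  diffC set_x1 x1_of f /\ diffC set_v1 v1_of f.

Lemma diff1_fadd f g : diff1 f -> diff1 g -> diff1 (fadd f g).
Proof. intros [] []. split; now apply diffC_fadd. Qed.

Lemma diff1_cscale c f : diff1 f -> diff1 (cscale c f).
Proof. intros []. split; now apply diffC_cscale. Qed.

Lemma diff1_fmul f g : diff1 f -> diff1 g -> diff1 (fmul f g).
Proof. intros [] []. split; now apply diffC_fmul. Qed.

Lemma diff1_const c : diff1 (fun _ => c).
Proof. split; apply diffC_const. Qed.

Lemma pdx1_fadd f g : diff1 f -> diff1 g -> pdx1 (fadd f g) = fadd (pdx1 f) (pdx1 g).
Proof. intros [Hf _] [Hg _]. exact (pdC_fadd _ _ f g Hf Hg). Qed.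

Lemma pdv1_fadd f g : diff1 f -> diff1 g -> pdv1 (fadd f g) = fadd (pdv1 f) (pdv1 g).
Proof. intros [_ Hf] [_ Hg]. exact (pdC_fadd _ _ f g Hf Hg). Qed.

Lemma pdx1_cscale c f : diff1 f -> pdx1 (cscale c f) = cscale c (pdx1 f).
Proof. intros [Hf _]. exact (pdC_cscale _ _ c f Hf). Qed.

Lemma pdv1_cscale c f : diff1 f -> pdv1 (cscale c f) = cscale c (pdv1 f).
Proof. intros [_ Hf]. exact (pdC_cscale _ _ c f Hf). Qed.

Lemma pdx1_fmul f g :
  diff1 f -> diff1 g -> pdx1 (fmul f g) = fadd (fmul (pdx1 f) g) (fmul f (pdx1 g)).
Proof. intros [Hf _] [Hg _]. exact (pdC_fmul _ _ set_x1_x1_of f g Hf Hg). Qed.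

Lemma pdv1_fmul f g :
  diff1 f -> diff1 g -> pdv1 (fmul f g) = fadd (fmul (pdv1 f) g) (fmul f (pdv1 g)).
Proof. intros [_ Hf] [_ Hg]. exact (pdC_fmul _ _ set_v1_v1_of f g Hf Hg). Qed.

Lemma pdx1_const c : pdx1 (fun _ => c) = fun _ => RtoC 0.
Proof.
  apply functional_extensionality; intros z. unfold pdx1, pdx1R.
  now rewrite !Derive_const.
Qed.

Lemma pdv1_const c : pdv1 (fun _ => c) = fun _ => RtoC 0.
Proof.
  apply functional_extensionality; intros z. unfold pdv1, pdv1R.
  now rewrite !Derive_const.
Qed.

Lemma iterDR_app_single w b u :
  iterDR (w ++ b :: nil) u = iterDR w ((if b then pdx1R else pdv1R) u).
Proof. induction w as [|c w IH]; simpl; congruence. Qed.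

Lemma smoothR_pdx1R u : smoothR u -> smoothR (pdx1R u).
Proof. intros Hu w. rewrite <- (iterDR_app_single w true). apply Hu. Qed.

Lemma smoothR_pdv1R u : smoothR u -> smoothR (pdv1R u).
Proof. intros Hu w. rewrite <- (iterDR_app_single w false). apply Hu. Qed.

Lemma iterDR_lin a b u v : smoothR u -> smoothR v -> forall w,
  iterDR w (fun z => a * u z + b * v z) = fun z => a * iterDR w u z + b * iterDR w v z.
Proof.
  intros Hu Hv w. induction w as [|c w IH]; [reflexivity|].
  simpl. rewrite IH. apply functional_extensionality; intros z.
  destruct (Hu w z) as (Hux & Huv & _), (Hv w z) as (Hvx & Hvv & _).
  destruct c; unfold pdx1R, pdv1R;
    rewrite Derive_plus, !Derive_scal by (now apply ex_derive_scal); reflexivity.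
Qed.

Lemma smoothR_lin a b u v w : smoothR u -> smoothR v ->
  (forall z, w z = a * u z + b * v z) -> smoothR w.
Proof.
  intros Hu Hv Hw. replace w with (fun z => a * u z + b * v z)
    by (symmetry; now apply functional_extensionality).
  intros d z. rewrite (iterDR_lin a b u v Hu Hv d).
  destruct (Hu d z) as (Hux & Huv & Huc), (Hv d z) as (Hvx & Hvv & Hvc).
  split; [|split].
  - apply (ex_derive_plus (V := R_NormedModule)); now apply ex_derive_scal.
  - apply (ex_derive_plus (V := R_NormedModule)); now apply ex_derive_scal.
  - apply (continuous_plus (V := R_NormedModule));
      now apply (continuous_scal_r (K := R_AbsRing) (V := R_NormedModule)).
Qed.

Lemma smoothC_fadd f g : smoothC f -> smoothC g -> smoothC (fadd f g).
Proof.
  intros [Hf1 Hf2] [Hg1 Hg2]. split.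
  - apply (smoothR_lin 1 1 _ _ _ Hf1 Hg1). intros z. unfold fadd, Cplus, Re; simpl. ring.
  - apply (smoothR_lin 1 1 _ _ _ Hf2 Hg2). intros z. unfold fadd, Cplus, Im; simpl. ring.
Qed.

Lemma smoothC_cscale c f : smoothC f -> smoothC (cscale c f).
Proof.
  intros [Hf1 Hf2]. split.
  - apply (smoothR_lin (fst c) (- snd c) _ _ _ Hf1 Hf2). intros z.
    unfold cscale, Cmult, Re, Im; simpl. ring.
  - apply (smoothR_lin (snd c) (fst c) _ _ _ Hf1 Hf2). intros z.
    unfold cscale, Cmult, Re, Im; simpl. ring.
Qed.

Lemma smoothC_pdx1 f : smoothC f -> smoothC (pdx1 f).
Proof. intros [Hf1 Hf2]. exact (conj (smoothR_pdx1R _ Hf1) (smoothR_pdx1R _ Hf2)). Qed.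

Lemma smoothC_pdv1 f : smoothC f -> smoothC (pdv1 f).
Proof. intros [Hf1 Hf2]. exact (conj (smoothR_pdv1R _ Hf1) (smoothR_pdv1R _ Hf2)). Qed.

Lemma smoothC_diff1 f : smoothC f -> diff1 f.
Proof.
  intros [Hf1 Hf2]. split; intros z.
  - exact (conj (proj1 (Hf1 nil z)) (proj1 (Hf2 nil z))).
  - exact (conj (proj1 (proj2 (Hf1 nil z))) (proj1 (proj2 (Hf2 nil z)))).
Qed.

Create HintDb smooth.
#[local] Hint Resolve smoothC_fadd smoothC_cscale smoothC_pdx1 smoothC_pdv1 smoothC_diff1
  diff1_fadd diff1_cscale diff1_fmul diff1_const : smooth.

Lemma pdx1R_pdv1R u : smoothR u -> pdx1R (pdv1R u) = pdv1R (pdx1R u).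
Proof.
  intros Hu. apply functional_extensionality; intros [[[a1 a2] a3] [[b1 b2] b3]].
  set (F := fun a b => u ((a, a2, a3), (b, b2, b3))).
  change (Derive (fun s => Derive (fun r => F s r) b1) a1
          = Derive (fun r => Derive (fun s => F s r) a1) b1).
  apply Schwarz.
  - exists (mkposreal 1 Rlt_0_1). intros x y _ _.
    repeat split.
    + exact (proj1 (Hu nil ((x, a2, a3), (y, b2, b3)))).
    + exact (proj1 (proj2 (Hu nil ((x, a2, a3), (y, b2, b3))))).
    + exact (proj1 (Hu (false :: nil) ((x, a2, a3), (y, b2, b3)))).
    + exact (proj1 (proj2 (Hu (true :: nil) ((x, a2, a3), (y, b2, b3))))).
  - apply continuity_2d_pt_filterlim.
    exact (proj2 (proj2 (Hu (true :: false :: nil) ((a1, a2, a3), (b1, b2, b3))))).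
  - apply continuity_2d_pt_filterlim.
    exact (proj2 (proj2 (Hu (false :: true :: nil) ((a1, a2, a3), (b1, b2, b3))))).
Qed.

Lemma pdx1_pdv1 f : smoothC f -> pdx1 (pdv1 f) = pdv1 (pdx1 f).
Proof.
  intros [Hf1 Hf2]. apply functional_extensionality; intros z.
  change ((pdx1R (pdv1R (fun y => Re (f y))) z, pdx1R (pdv1R (fun y => Im (f y))) z)
          = (pdv1R (pdx1R (fun y => Re (f y))) z, pdv1R (pdx1R (fun y => Im (f y))) z)).
  now rewrite !pdx1R_pdv1R.
Qed.

(** * The operators M and Λ *)

(* Smoothness is not shown to be stable under products; this weaker class contains the
   products of smooth functions ([diff2_fmul]) and is all that linearity of [M] needs. *)
Definition diff2 (f : state -> C) : Prop := diff1 f /\ diff1 (pdx1 f) /\ diff1 (pdv1 f).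

Lemma diff2_fadd f g : diff2 f -> diff2 g -> diff2 (fadd f g).
Proof.
  intros (Hf & Hfx & Hfv) (Hg & Hgx & Hgv).
  split; [|split]; rewrite ?pdx1_fadd, ?pdv1_fadd by assumption; auto with smooth.
Qed.

Lemma diff2_cscale c f : diff2 f -> diff2 (cscale c f).
Proof.
  intros (Hf & Hfx & Hfv).
  split; [|split]; rewrite ?pdx1_cscale, ?pdv1_cscale by assumption; auto with smooth.
Qed.

Lemma diff2_const c : diff2 (fun _ => c).
Proof. split; [|split]; rewrite ?pdx1_const, ?pdv1_const; auto with smooth. Qed.

Lemma diff2_fmul f g : smoothC f -> smoothC g -> diff2 (fmul f g).
Proof.
  intros Hf Hg.
  split; [|split]; rewrite ?pdx1_fmul, ?pdv1_fmul by auto with smooth; auto 6 with smooth.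
Qed.

Lemma Mop_fadd t0 t f g :
  diff2 f -> diff2 g -> Mop t0 t (fadd f g) = fadd (Mop t0 t f) (Mop t0 t g).
Proof.
  intros (Hf & Hfx & Hfv) (Hg & Hgx & Hgv). unfold Mop.
  rewrite !pdv1_fadd, !pdx1_fadd by auto with smooth.
  apply functional_extensionality; intros z. unfold fadd, cscale. ring.
Qed.

Lemma Mop_cscale t0 t c f : diff2 f -> Mop t0 t (cscale c f) = cscale c (Mop t0 t f).
Proof.
  intros (Hf & Hfx & Hfv). unfold Mop.
  rewrite !pdv1_cscale, !pdx1_cscale by auto with smooth.
  apply functional_extensionality; intros z. unfold fadd, cscale. ring.
Qed.

Lemma Mop_const t0 t c : Mop t0 t (fun _ => c) = fun _ => RtoC 0.
Proof.
  unfold Mop. rewrite !pdv1_const, !pdx1_const.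
  apply functional_extensionality; intros z. unfold fadd, cscale. ring.
Qed.

Lemma smoothC_diff2 f : smoothC f -> diff2 f.
Proof. intros Hf. split; [|split]; auto with smooth. Qed.

Lemma diff2_Csum {A : Type} (L : list A) (F : A -> state -> C) :
  (forall a, diff2 (F a)) -> diff2 (fun z => Csum (map (fun a => F a z) L)).
Proof.
  intros HF. induction L as [|a L IH]; simpl; [exact (diff2_const (RtoC 0))|].
  exact (diff2_fadd (F a) _ (HF a) IH).
Qed.

Lemma Mop_Csum t0 t {A : Type} (L : list A) (F : A -> state -> C) :
  (forall a, diff2 (F a)) ->
  Mop t0 t (fun z => Csum (map (fun a => F a z) L))
  = fun z => Csum (map (fun a => Mop t0 t (F a) z) L).
Proof.
  intros HF. induction L as [|a L IH]; simpl; [exact (Mop_const t0 t (RtoC 0))|].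
  etransitivity; [exact (Mop_fadd t0 t (F a) _ (HF a) (diff2_Csum L F HF))|].
  now rewrite IH.
Qed.

Lemma sum_n_as_Csum (F : nat -> state -> C) N :
  (fun z => sum_n (fun i => F i z) N) = fun z => Csum (map (fun i => F i z) (seq 0 (S N))).
Proof. apply functional_extensionality; intros z. symmetry. apply Csum_map_seq. Qed.

Lemma diff2_sum_n (F : nat -> state -> C) N :
  (forall i, diff2 (F i)) -> diff2 (fun z => sum_n (fun i => F i z) N).
Proof. intros HF. rewrite sum_n_as_Csum. now apply diff2_Csum. Qed.

Lemma Mop_sum_n t0 t (F : nat -> state -> C) N :
  (forall i, diff2 (F i)) ->
  Mop t0 t (fun z => sum_n (fun i => F i z) N) = fun z => sum_n (fun i => Mop t0 t (F i) z) N.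
Proof. intros HF. rewrite !sum_n_as_Csum. now apply Mop_Csum. Qed.

Lemma Mop_expansion t0 t k (X : nat -> nat -> nat -> state -> C) :
  (forall l p q, diff2 (X l p q)) ->
  Mop t0 t (fun z => expansion k (fun l p q => X l p q z))
  = fun z => expansion k (fun l p q => Mop t0 t (X l p q) z).
Proof.
  intros HX. unfold expansion, sum3.
  rewrite Mop_sum_n by (intros l; do 2 (apply diff2_sum_n; intros);
    now apply (diff2_cscale _ (X l _ _))).
  apply functional_extensionality; intros z. apply sum_n_ext; intros l.
  rewrite Mop_sum_n by (intros p; apply diff2_sum_n; intros q;
    now apply (diff2_cscale _ (X l p q))).
  apply sum_n_ext; intros p.
  rewrite Mop_sum_n by (intros q; now apply (diff2_cscale _ (X l p q))).
  apply sum_n_ext; intros q.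
  exact (equal_f (Mop_cscale t0 t (coef_lpqC k l p q) (X l p q) (HX l p q)) z).
Qed.

Definition first_order (k a b : C) (f : state -> C) : state -> C :=
  cscale k (fadd (cscale a (pdv1 f)) (cscale b (pdx1 f))).

Lemma smoothC_first_order k a b f : smoothC f -> smoothC (first_order k a b f).
Proof. unfold first_order. auto with smooth. Qed.
#[local] Hint Resolve smoothC_first_order : smooth.

Lemma pdx1_first_order k a b f :
  smoothC f -> pdx1 (first_order k a b f) = first_order k a b (pdx1 f).
Proof.
  intros Hf. unfold first_order.
  rewrite pdx1_cscale, pdx1_fadd, !pdx1_cscale, pdx1_pdv1 by auto with smooth.
  reflexivity.
Qed.

Lemma pdv1_first_order k a b f :
  smoothC f -> pdv1 (first_order k a b f) = first_order k a b (pdv1 f).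
Proof.
  intros Hf. unfold first_order.
  rewrite pdv1_cscale, pdv1_fadd, !pdv1_cscale, <- pdx1_pdv1 by auto with smooth.
  reflexivity.
Qed.

Lemma first_order_fadd k a b f g : diff1 f -> diff1 g ->
  first_order k a b (fadd f g) = fadd (first_order k a b f) (first_order k a b g).
Proof.
  intros Hf Hg. unfold first_order. rewrite pdv1_fadd, pdx1_fadd by assumption.
  apply functional_extensionality; intros z. unfold fadd, cscale. ring.
Qed.

Lemma first_order_cscale k a b c f : diff1 f ->
  first_order k a b (cscale c f) = cscale c (first_order k a b f).
Proof.
  intros Hf. unfold first_order. rewrite pdv1_cscale, pdx1_cscale by assumption.
  apply functional_extensionality; intros z. unfold fadd, cscale. ring.
Qed.

Lemma smoothC_Mop t0 t f : smoothC f -> smoothC (Mop t0 t f).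
Proof. unfold Mop. auto 7 with smooth. Qed.
#[local] Hint Resolve smoothC_Mop : smooth.

Lemma Mop_first_order t0 t k a b f :
  smoothC f -> Mop t0 t (first_order k a b f) = first_order k a b (Mop t0 t f).
Proof.
  intros Hf. unfold Mop at 1.
  rewrite !pdv1_first_order, !pdx1_first_order by auto with smooth.
  unfold Mop. rewrite !first_order_fadd, !first_order_cscale by auto 7 with smooth.
  reflexivity.
Qed.

Lemma smoothC_LamJ t0 t j f : smoothC f -> smoothC (LamJ t0 t j f).
Proof. intros Hf. unfold LamJ. destruct (Nat.eqb j 1); now apply smoothC_first_order. Qed.
#[local] Hint Resolve smoothC_LamJ : smooth.

Lemma Mop_LamJ t0 t j f : smoothC f -> Mop t0 t (LamJ t0 t j f) = LamJ t0 t j (Mop t0 t f).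
Proof. intros Hf. unfold LamJ. destruct (Nat.eqb j 1); now apply Mop_first_order. Qed.

Lemma smoothC_applyLam t0 t w f : smoothC f -> smoothC (applyLam t0 t w f).
Proof. intros Hf. induction w; simpl; auto with smooth. Qed.
#[local] Hint Resolve smoothC_applyLam : smooth.

Lemma Mop_applyLam t0 t w f :
  smoothC f -> Mop t0 t (applyLam t0 t w f) = applyLam t0 t w (Mop t0 t f).
Proof.
  intros Hf. induction w as [|j w IH]; [reflexivity|]. simpl.
  now rewrite Mop_LamJ, IH by auto with smooth.
Qed.

Lemma smoothC_iter_Mop t0 t p f : smoothC f -> smoothC (Nat.iter p (Mop t0 t) f).
Proof. intros Hf. induction p; simpl; auto with smooth. Qed.
#[local] Hint Resolve smoothC_iter_Mop : smooth.

Definition carre_du_champ (t0 t : R) (F G : state -> C) : state -> C :=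
  fun z => (RtoC (- (t - t0)) * (pdv1 F z * pdv1 G z)
    + RtoC (- (t - t0) ^ 2 / 2) * (pdv1 F z * pdx1 G z + pdx1 F z * pdv1 G z)
    + RtoC (- ((t - t0) ^ 3 / 3)) * (pdx1 F z * pdx1 G z))%C.

Lemma Mop_fmul t0 t F G : diff2 F -> diff2 G ->
  Mop t0 t (fmul F G)
  = fun z => (Mop t0 t F z * G z + F z * Mop t0 t G z + 2 * carre_du_champ t0 t F G z)%C.
Proof.
  intros (HF & HFx & HFv) (HG & HGx & HGv). unfold Mop at 1.
  repeat first [ rewrite pdv1_fmul by auto with smooth | rewrite pdx1_fmul by auto with smooth
               | rewrite pdv1_fadd by auto with smooth | rewrite pdx1_fadd by auto with smooth ].
  apply functional_extensionality; intros z. unfold Mop, carre_du_champ, fadd, fmul, cscale.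
  replace (RtoC (- (t - t0) ^ 2)) with (2 * RtoC (- (t - t0) ^ 2 / 2))%C
    by (rewrite <- RtoC_mult; f_equal; field).
  ring.
Qed.

Lemma Lam_polarization t0 t F G z : t0 <= t ->
  (Lam1 t0 t F z * Lam1 t0 t G z + Lam2 t0 t F z * Lam2 t0 t G z)%C = carre_du_champ t0 t F G z.
Proof.
  intros Ht. unfold Lam1, Lam2, carre_du_champ, cscale, fadd.
  generalize (pdv1 F z) (pdx1 F z) (pdv1 G z) (pdx1 G z); intros v x v' x'.
  assert (E1 : (/ (2 * Ci) * / (2 * Ci))%C = RtoC (- / 4)).
  { unfold Cinv, Cmult, Ci, RtoC. apply injective_projections; simpl; field. }
  assert (E2 : (sqrt 3 / (6 * Ci) * (sqrt 3 / (6 * Ci)))%C = RtoC (- / 12)).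
  { unfold Cdiv.
    transitivity (RtoC (sqrt 3 * sqrt 3) * (/ (6 * Ci) * / (6 * Ci)))%C; [rewrite RtoC_mult; ring|].
    rewrite sqrt_sqrt by lra.
    unfold Cinv, Cmult, Ci, RtoC. apply injective_projections; simpl; field. }
  set (r := sqrt (t - t0)). assert (Hr : t - t0 = r * r) by (symmetry; apply sqrt_sqrt; lra).
  rewrite Hr.
  transitivity
    ((/ (2 * Ci) * / (2 * Ci)) * ((r * v + r * r * r * x) * (r * v' + r * r * r * x'))
     + (sqrt 3 / (6 * Ci) * (sqrt 3 / (6 * Ci)))
       * ((3 * r * v + r * r * r * x) * (3 * r * v' + r * r * r * x')))%C.
  { rewrite <- !RtoC_mult. ring. }
  rewrite E1, E2. apply injective_projections; simpl; field.
Qed.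

Lemma LamDot_S t0 t l F G z :
  LamDot t0 t (S l) F G z
  = Csum (map (fun w =>
      Lam1 t0 t (applyLam t0 t w F) z * Lam1 t0 t (applyLam t0 t w G) z
      + Lam2 t0 t (applyLam t0 t w F) z * Lam2 t0 t (applyLam t0 t w G) z)%C (words l)).
Proof.
  unfold LamDot. simpl words. rewrite map_flat_map.
  etransitivity; [apply Csum_flat_map|].
  f_equal. apply map_ext; intros w. simpl. cbn [LamJ Nat.eqb]. ring.
Qed.

Lemma diff2_LamDot t0 t l F G : smoothC F -> smoothC G -> diff2 (LamDot t0 t l F G).
Proof.
  intros HF HG.
  exact (diff2_Csum (words l) (fun w => fmul (applyLam t0 t w F) (applyLam t0 t w G))
           (fun w => diff2_fmul _ _ (smoothC_applyLam t0 t w F HF) (smoothC_applyLam t0 t w G HG))).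
Qed.

Lemma Mop_LamDot t0 t l F G : t0 <= t -> smoothC F -> smoothC G ->
  Mop t0 t (LamDot t0 t l F G)
  = fun z => (LamDot t0 t l (Mop t0 t F) G z + LamDot t0 t l F (Mop t0 t G) z
              + 2 * LamDot t0 t (S l) F G z)%C.
Proof.
  intros Ht HF HG.
  etransitivity;
    [exact (Mop_Csum t0 t (words l) (fun w => fmul (applyLam t0 t w F) (applyLam t0 t w G))
              (fun w => diff2_fmul _ _ (smoothC_applyLam t0 t w F HF)
                                       (smoothC_applyLam t0 t w G HG)))|].
  apply functional_extensionality; intros z. rewrite LamDot_S. unfold LamDot.
  rewrite <- Csum_map_Cmult_l, <- !Csum_map_Cplus. f_equal. apply map_ext; intros w.
  rewrite Mop_fmul by (apply smoothC_diff2; auto with smooth).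
  rewrite !Mop_applyLam, Lam_polarization by assumption.
  reflexivity.
Qed.

Theorem iter_Mop_fmul t0 t g h : t0 <= t -> smoothC g -> smoothC h -> forall k,
  Nat.iter k (Mop t0 t) (fmul g h)
  = fun z => expansion k (fun l p q =>
      LamDot t0 t l (Nat.iter p (Mop t0 t) g) (Nat.iter q (Mop t0 t) h) z).
Proof.
  intros Ht Hg Hh k. induction k as [|k IH]; apply functional_extensionality; intros z.
  - rewrite expansion_O. unfold LamDot, fmul. simpl. ring.
  - simpl Nat.iter at 1.
    rewrite IH, Mop_expansion by (intros; apply diff2_LamDot; auto with smooth).
    rewrite expansion_S. apply expansion_ext; intros l p q _.
    now rewrite Mop_LamDot by auto with smooth.
Qed.

Theorem lemma4p2 (t0 t : R) (Ht0 : 0 < t0 <= 1 / 2) (Ht : t0 <= t <= 1) :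
  coef 0 0 0 0 0 = 1%nat /\
  (forall k j : nat, (j <= 2 * k)%nat ->
     INR (sum_lpq Nat.add 0%nat k j (fun l p q => coef k j l p q))
       = Binomial.C (2 * k) j) /\
  (forall (k : nat) (g h : state -> C),
     smoothC g -> smoothC h -> periodic_x g -> periodic_x h ->
     forall z : state,
       Nat.iter k (Mop t0 t) (fmul g h) z
       = Csum (map (fun j => Aterm t0 t k j g h z) (seq 0 (S (2 * k))))).
Proof.
  split; [reflexivity | split].
  - exact sum_lpq_coef_binomial.
  - intros k g h Hg Hh _ _ z.
    rewrite (iter_Mop_fmul t0 t g h) by (lra || assumption).
    rewrite Csum_map_seq. symmetry. apply sum_n_sum_lpq_coef.
Qed.
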